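(* Let $(\mathsf{E},\mathcal{F},\mu)$ be a probability space and let $P_{1}$ and $(P_{2,\iota})_{\iota>0}$ be $\mu$-invariant Markov kernels. Let $\Phi:\mathrm{L}^{2}(\mu)\to[0,\infty]$ with $a:=\sup_{f\in\mathrm{L}_{0}^{2}(\mu)\setminus\{0\}}\|f\|_{2}^{2}/\Phi(f)\in(0,\infty)$ satisfy $\Phi(cf)=c^{2}\Phi(f)$, $\|f-\mu(f)\|_{2}^{2}\le a\Phi(f-\mu(f))$ and non-expansivity $\Phi(T^{n}f)\le\Phi(f)$ for $T\in\{P_{1}\}\cup\{P_{2,\iota}\}_{\iota>0}$. Assume $P_{1}$ satisfies a super-Poincaré inequality with function $\beta_{1}$ and that for every $\iota>0$, \[ \|f\|_{2}^{2}\le s\,\mathcal{E}(P_{2,\iota}^{*}P_{2,\iota},f)+\beta_{2,\iota}(s)\Phi(f)\qquad\forall s>0,\ f\in\mathrm{L}_{0}^{2}(\mu), \] where $\beta_{1},\beta_{2,\iota}:(0,\infty)\to[0,\infty)$ are decreasing and tend to $0$ at $\infty$. For $\beta\in\{\beta_{1},\beta_{2,\iota}\}$ let $K(u)=u\beta(1/u)$, $K(0)=0$, $K^{*}(v)=\sup_{u\ge0}\{uv-K(u)\}$, $F(x)=\int_{x}^{a}\mathrm{d}v/K^{*}(v)$ for $x\in(0,a]$, giving $F_{1}$ and $F_{2,\iota}$, with inverses $F_{1}^{-1},F_{2,\iota}^{-1}:[0,\infty)\to(0,a]$ (so $F^{-1}(0)=a$). Assume that $\beta_{2,\iota}\ge\beta_{1}$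 pointwise for every $\iota>0$ and that $\lim_{\iota\to0}\beta_{2,\iota}(s)=\beta_{1}(s)$ for every $s>0$. Then for every $\iota>0$ and $n\in\mathbb{N}$, $F_{2,\iota}^{-1}(n)\ge F_{1}^{-1}(n)$, and \[ \lim_{\iota\to0}\sup_{n\ge0}\big\{F_{2,\iota}^{-1}(n)-F_{1}^{-1}(n)\big\}=0. \]
   Context: A kernel $P$ satisfies a super-Poincaré inequality with function $\beta$ (decreasing, $\beta(s)\downarrow0$) if $\|f\|_{2}^{2}\le s\,\mathcal{E}(P^{*}P,f)+\beta(s)\Phi(f)$ for all $s>0$, $f\in\mathrm{L}_{0}^{2}(\mu)$. $\mathcal{E}(T,f)=\langle(\mathrm{Id}-T)f,f\rangle$ in $\mathrm{L}^{2}(\mu)$, $P^{*}$ is the adjoint, and $\mathrm{L}_{0}^{2}(\mu)$ is the mean-zero subspace. *)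

From HB Require Import structures.
From mathcomp Require Import all_boot all_order all_algebra.
From mathcomp Require Import all_classical all_reals all_analysis.
Set Implicit Arguments. Unset Strict Implicit. Unset Printing Implicit Defensive.
Import Order.TTheory GRing.Theory Num.Theory.
Import numFieldNormedType.Exports.
Local Open Scope classical_set_scope.
Local Open Scope ring_scope.

Section L2defs.
Context {d : measure_display} {T : measurableType d} {R : realType}.
Variable mu : probability T R.

(* the set L^2(mu) (functions, not classes) *)
Definition L2 : set (T -> R) :=
  [set f : T -> R | measurable_fun setT f /\
           mu.-integrable setT (fun x => ((f x) ^+ 2)%:E)].

Definition norm2sq (f : T -> R) : R := fine (\int[mu]_x ((f x) ^+ 2)%:E)%E.

Definition mean (f : T -> R) : R := fine (\int[mu]_x (f x)%:E)%E.

Definition L20 : set (T -> R) := [set f : T -> R | L2 f /\ mean f = 0].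

Definition kop (P : R.-pker T ~> T) (f : T -> R) : T -> R :=
  fun x => fine (\int[P x]_y (f y)%:E)%E.

Definition mu_invariant (P : R.-pker T ~> T) : Prop :=
  forall A, measurable A -> (\int[mu]_x (P x A) = mu A)%E.

(* E(P^* P, f) = <(Id - P^*P) f, f> = ||f||^2 - <P f, P f> *)
Definition dirichlet_PstarP (P : R.-pker T ~> T) (f : T -> R) : R :=
  norm2sq f - norm2sq (kop P f).

Definition superPoincare (P : R.-pker T ~> T) (Phi : (T -> R) -> \bar R)
    (beta : R -> R) : Prop :=
  forall s, 0 < s -> forall f, L20 f ->
    ((norm2sq f)%:E <= (s * dirichlet_PstarP P f)%:E + (beta s)%:E * Phi f)%E.

End L2defs.

Section Fdefs.
Context {R : realType}.

Definition Kfun (beta : R -> R) (u : R) : R :=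
  if u == 0 then 0 else u * beta (u^-1).

Definition Kstar (beta : R -> R) (v : R) : \bar R :=
  ereal_sup [set ((u * v - Kfun beta u)%:E) | u in [set u : R | 0 <= u]].

Definition Ffun (a : R) (beta : R -> R) (x : R) : \bar R :=
  (\int[lebesgue_measure]_(v in `[x, a]) (Kstar beta v)^-1)%E.

Definition Finv (a : R) (beta : R -> R) (y : R) : R :=
  inf [set x : R | 0 < x <= a /\ (Ffun a beta x <= y%:E)%E].

End Fdefs.

From HB Require Import structures.
From mathcomp Require Import all_boot all_order all_algebra.
From mathcomp Require Import all_classical all_reals all_analysis.
From mathcomp Require Import measurable_realfun.
From mathcomp.algebra_tactics Require Import lra.
Import Order.TTheory GRing.Theory Num.Theory.
Import numFieldNormedType.Exports.
Local Open Scope classical_set_scope.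
Local Open Scope ring_scope.

(* Write [g = 1 / K^*] for [beta1] and [g_i] for [beta2 i], so that [F x] is the
   integral of [g] over [[x, a]].  As [K^*] decreases when [beta] increases,
   [beta1 <= beta2 i] gives [g <= g_i], [F <= F_i] and [F^-1 <= F_i^-1].
   Conversely [K^*] is a supremum of functions continuous in [beta], hence lower
   semicontinuous as [beta2 i -> beta1]: at the finitely many points [a - j d] of a
   grid of mesh [d], eventually [g_i <= g + eta].  Both functions being
   nonincreasing, comparing them cell by cell gives [F_i (x + 3 d) <= F x], the
   accumulated error [a eta] being absorbed by one cell of [g] provided
   [K eta <= g (a - d)]; that [g (a - d) > 0] follows from the super-Poincare
   inequality for [P1] and the definition of [a].  Hence [F_i^-1 <= F^-1 + 3 d]
   uniformly in [n]. *)

Section Kstar.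
Context {R : realType}.
Implicit Types (beta : R -> R) (u v : R).

Lemma Kfun0 beta : Kfun beta 0 = 0.
Proof. by rewrite /Kfun eqxx. Qed.

Lemma Kstar_ge beta u v : 0 <= u -> ((u * v - Kfun beta u)%:E <= Kstar beta v)%E.
Proof. by move=> u0; apply: ereal_sup_ubound; exists u. Qed.

Lemma Kstar_ge0 beta v : (0 <= Kstar beta v)%E.
Proof. by have := Kstar_ge beta 0 v (lexx 0); rewrite Kfun0 mul0r subr0. Qed.

Lemma Kstar_gtP beta v (t : R) : (t%:E < Kstar beta v)%E ->
  exists2 u, 0 <= u & t < u * v - Kfun beta u.
Proof. by move=> /ereal_sup_gt[_ [u /= u0 <-]]; rewrite lte_fin; exists u. Qed.

Lemma Kstar_nondecreasing beta : nondecreasing_fun (Kstar beta).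
Proof.
move=> v w vw; apply: ge_ereal_sup => _ [u /= u0 <-].
by apply: le_trans (Kstar_ge beta u w u0); rewrite lee_fin lerD2r ler_wpM2l.
Qed.

Lemma Kstar_le_beta beta1 beta2 v : (forall s, 0 < s -> beta1 s <= beta2 s) ->
  (Kstar beta2 v <= Kstar beta1 v)%E.
Proof.
move=> b12; apply: ge_ereal_sup => _ [u /= u0 <-].
apply: le_trans (Kstar_ge beta1 u v u0); rewrite lee_fin lerD2l lerN2 /Kfun.
case: ifPn => // un0.
by rewrite ler_wpM2l // b12 // invr_gt0 lt_neqAle eq_sym un0.
Qed.

(* For [u >= 1/t] the supremand [u (v - beta (1/u))] is negative,
   for [u < 1/t] it is at most [v/t]. *)
Lemma Kstar_le_div beta v t : 0 <= v -> 0 < t -> v < beta t ->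
  (forall s, 0 < s -> 0 <= beta s) ->
  (forall s r, 0 < s -> s <= r -> beta r <= beta s) ->
  (Kstar beta v <= (v / t)%:E)%E.
Proof.
move=> v0 t0 vb b0 bdec; apply: ge_ereal_sup => _ [u /= u0 <-]; rewrite lee_fin /Kfun.
have vt0 : 0 <= v / t by rewrite divr_ge0 // ltW.
case: ifPn => [/eqP ->|un0]; first by rewrite mul0r subr0.
have up : 0 < u by rewrite lt_neqAle eq_sym un0.
have [ut|tu] := leP t^-1 u.
  apply: le_trans vt0; rewrite -mulrBr pmulr_rle0 // subr_le0 ltW //.
  apply: lt_le_trans vb (bdec _ _ _ _); rewrite ?invr_gt0 //.
  by rewrite -[t]invrK lef_pV2 ?posrE ?invr_gt0.
apply: (le_trans (y := u * v)); first by rewrite gerDl oppr_le0 mulr_ge0 ?b0 ?invr_gt0.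
by rewrite mulrC ler_wpM2l // ltW.
Qed.

End Kstar.

Lemma inve_approx {R : realType} (k : \bar R) (eta : R) : (0 < k)%E -> 0 < eta ->
  exists t : R, [/\ 0 < t, (t%:E < k)%E & ((t%:E)^-1 <= k^-1 + eta%:E)%E].
Proof.
case: k => [r||] // r0 eta0; last first.
  exists eta^-1; split; rewrite ?invr_gt0 ?ltey //.
  by rewrite invey add0e inver invr_eq0 gt_eqF // invrK.
rewrite lte_fin in r0.
have h0 : 0 < 1 + eta * r by rewrite addr_gt0 // mulr_gt0.
exists (r / (1 + eta * r)); split.
- by rewrite divr_gt0.
- by rewrite lte_fin ltr_pdivrMr // ltr_pMr // ltrDl mulr_gt0.
- rewrite !inver !gt_eqF ?divr_gt0 // -EFinD lee_fin invf_div.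
  by rewrite mulrDl mul1r mulfK ?gt_eqF.
Qed.

Section Kstar_limit.
Context {R : realType} {I : Type} (F : set_system I) {FF : Filter F}.
Variables (b : I -> R -> R) (beta : R -> R).
Hypothesis b_cvg : forall s, 0 < s -> b i s @[i --> F] --> beta s.

Lemma Kfun_cvg u : 0 <= u -> Kfun (b i) u @[i --> F] --> Kfun beta u.
Proof.
have [-> _|un0 u0] := eqVneq u 0; first by rewrite /Kfun eqxx; exact: cvg_cst.
rewrite /Kfun (negbTE un0); apply: cvgMr; apply: b_cvg.
by rewrite invr_gt0 lt_neqAle eq_sym un0.
Qed.

Lemma Kstar_lsc v (t : R) : (t%:E < Kstar beta v)%E ->
  \forall i \near F, (t%:E < Kstar (b i) v)%E.
Proof.
move=> /Kstar_gtP[u u0 tu].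
have cvgu : u * v - Kfun (b i) u @[i --> F] --> u * v - Kfun beta u.
  by apply: cvgB; [exact: cvg_cst|exact: Kfun_cvg].
apply: filterS (cvgr_gt _ cvgu _ tu) => i tui.
by apply: lt_le_trans (Kstar_ge _ u v u0); rewrite lte_fin.
Qed.

Lemma invKstar_usc v eta : 0 < eta ->
  \forall i \near F, ((Kstar (b i) v)^-1 <= (Kstar beta v)^-1 + eta%:E)%E.
Proof.
move=> eta0; have [K0|Kpos] := eqVneq (Kstar beta v) 0%E.
  by apply: nearW => i; rewrite K0 inve0 addye ?leey.
have [t [t0 tK tinv]] : exists t : R, [/\ 0 < t, (t%:E < Kstar beta v)%E &
    ((t%:E)^-1 <= (Kstar beta v)^-1 + eta%:E)%E].
  by apply: inve_approx eta0; rewrite lt0e Kpos Kstar_ge0.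
apply: filterS (Kstar_lsc _ _ tK) => i /ltW tKi; apply: le_trans tinv.
by rewrite lee_pV2 ?inE /= ?Kstar_ge0 ?lee_fin ?(ltW t0).
Qed.

End Kstar_limit.

Lemma nonincreasing_emeasurable {R : realType} (D : set R) (f : R -> \bar R) :
  measurable D -> nonincreasing_fun f -> measurable_fun D f.
Proof.
move=> mD f_ni.
apply: (measurability _ (ErealGenCInfty.measurableE R)) => //.
move=> /= _ [_ [r ->] <-]; apply: measurableI => //.
apply: is_interval_measurable => s t /=.
rewrite !in_itv /= !andbT => _ ft u /andP[_ ut].
by rewrite in_itv /= andbT (le_trans ft) // f_ni.
Qed.

Lemma lebesgue_measure_itv_co {R : realType} (p q : R) : p <= q ->
  lebesgue_measure `[p, q[ = (q - p)%:E.
Proof.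
move=> pq; rewrite lebesgue_measure_itv /= lte_fin.
case: ltP => // qp.
have -> : q = p by apply/le_anti; rewrite qp pq.
by rewrite subrr.
Qed.

Section nonincreasing_integral.
Context {R : realType}.
Local Open Scope ereal_scope.
Context {g : R -> \bar R}.
Hypotheses (g_ge0 : forall v, 0 <= g v) (g_ni : nonincreasing_fun g).

Let mg (D : set R) : measurable D -> measurable_fun D g.
Proof. by move=> mD; exact: nonincreasing_emeasurable. Qed.

Lemma integral_itv_split {p q r : R} : (p <= q)%R -> (q <= r)%R ->
  \int[lebesgue_measure]_(v in `[p, r]) g v =
  \int[lebesgue_measure]_(v in `[p, q[) g v + \int[lebesgue_measure]_(v in `[q, r]) g v.
Proof.
move=> pq qr.
rewrite (@itv_bndbnd_setU _ _ (BLeft p) (BLeft q) (BRight r)) ?bnd_simp //.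
apply: ge0_integral_setU => //; first by apply: mg; exact: measurableU.
apply/disj_setPS => v [] /=; rewrite !in_itv /= => /andP[_ vq] /andP[qv _].
by move: (lt_le_trans vq qv); rewrite ltxx.
Qed.

Lemma integral_itv_co_ge {p q : R} : (p <= q)%R ->
  g q * (q - p)%:E <= \int[lebesgue_measure]_(v in `[p, q[) g v.
Proof.
move=> pq; rewrite -lebesgue_measure_itv_co // -integral_cst //.
apply: (ge0_le_integral lebesgue_measure) => //; [by move=> *; exact: g_ge0|exact: mg|].
by move=> v; rewrite /= in_itv /= => /andP[_ /ltW vq]; exact: g_ni.
Qed.

Lemma integral_itv_co_le {p q : R} : (p <= q)%R ->
  \int[lebesgue_measure]_(v in `[p, q[) g v <= g p * (q - p)%:E.
Proof.
move=> pq; rewrite -lebesgue_measure_itv_co // -integral_cst //.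
apply: (ge0_le_integral lebesgue_measure) => //; first exact: mg.
by move=> v; rewrite /= in_itv /= => /andP[pv _]; exact: g_ni.
Qed.

Lemma le_integral_itv_cc {p q : R} (r : R) : (p <= q)%R ->
  \int[lebesgue_measure]_(v in `[q, r]) g v <= \int[lebesgue_measure]_(v in `[p, r]) g v.
Proof.
move=> pq; apply: ge0_subset_integral => //; first exact: mg.
by apply: subset_itvr; rewrite bnd_simp.
Qed.

End nonincreasing_integral.

Section grid_comparison.
Context {R : realType}.
Local Open Scope ereal_scope.
Context {g h : R -> \bar R}.
Hypotheses (g_ge0 : forall v, 0 <= g v) (g_ni : nonincreasing_fun g).
Hypotheses (h_ge0 : forall v, 0 <= h v) (h_ni : nonincreasing_fun h).
Context {a d eta : R}.
Hypotheses (d_gt0 : (0 < d)%R) (eta_ge0 : (0 <= eta)%R).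

(* On [[y - d, y[], [h <= h (y - d) <= g (y - d) + eta], and [g (y - d)] is at most
   the mean of [g] on the previous cell [[y - 2d, y - d[]. *)
Lemma integral_grid_step (y c : R) : (y <= a)%R ->
  h (y - d)%R <= g (y - d)%R + eta%:E ->
  \int[lebesgue_measure]_(v in `[y, a]) h v <=
    \int[lebesgue_measure]_(v in `[(y - d)%R, a]) g v + c%:E ->
  \int[lebesgue_measure]_(v in `[(y - d)%R, a]) h v <=
    \int[lebesgue_measure]_(v in `[(y - d - d)%R, a]) g v + (c + eta * d)%:E.
Proof.
move=> ya hg IH.
have yd : (y - d <= y)%R by rewrite gerBl ltW.
have yyd : (y - (y - d) = d)%R by rewrite opprB addrC subrK.
have ydd : (y - d - (y - d - d) = d)%R by rewrite opprB addrC subrK.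
rewrite (integral_itv_split h_ge0 h_ni yd ya).
have ydd_le : (y - d - d <= y - d)%R by rewrite gerBl ltW.
rewrite (integral_itv_split g_ge0 g_ni ydd_le (le_trans yd ya)).
have hstep : \int[lebesgue_measure]_(v in `[(y - d)%R, y[) h v <=
    \int[lebesgue_measure]_(v in `[(y - d - d)%R, (y - d)%R[) g v + (eta * d)%:E.
  apply: le_trans (integral_itv_co_le h_ge0 h_ni yd) _; rewrite yyd.
  have d0 : 0 <= d%:E by rewrite lee_fin ltW.
  apply: le_trans (lee_wpmul2r d0 hg) _.
  rewrite ge0_muleDl // EFinM leeD2r // -[X in _ * X%:E]ydd.
  exact: integral_itv_co_ge.
apply: le_trans (leeD hstep IH) _.
by rewrite EFinD addeACA [X in _ + X <= _]addeC addeA.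
Qed.

Lemma integral_grid (m : nat) :
  (forall j, (0 < j <= m)%N -> h (a - j%:R * d)%R <= g (a - j%:R * d)%R + eta%:E) ->
  \int[lebesgue_measure]_(v in `[(a - m%:R * d)%R, a]) h v <=
    \int[lebesgue_measure]_(v in `[(a - m.+1%:R * d)%R, a]) g v + (m%:R * (eta * d))%:E.
Proof.
elim: m => [|m IH] hg.
  by rewrite mul0r subr0 set_itv1 integral_set1 mul0r adde0 integral_ge0.
have eS (k : nat) : (a - k.+1%:R * d = a - k%:R * d - d)%R.
  by rewrite mulrSr mulrDl mul1r opprD addrA.
rewrite !eS mulrSr mulrDl mul1r.
apply: integral_grid_step.
- by rewrite gerBl mulr_ge0 // ltW.
- by rewrite -eS; apply: hg; rewrite /= leqnn.
- by rewrite -eS; apply: IH => j /andP[j0 jm]; apply: hg; rewrite j0 ltnW.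
Qed.

Lemma integral_grid_shift (m : nat) :
  (forall j, (0 < j <= m)%N -> h (a - j%:R * d)%R <= g (a - j%:R * d)%R + eta%:E) ->
  (m%:R * eta)%:E <= g (a - d)%R ->
  \int[lebesgue_measure]_(v in `[(a - m%:R * d)%R, a]) h v <=
    \int[lebesgue_measure]_(v in `[(a - m.+2%:R * d)%R, a]) g v.
Proof.
move=> hg meta; apply: le_trans (integral_grid m hg) _.
have -> : (a - m.+2%:R * d = a - m.+1%:R * d - d)%R.
  by rewrite [in LHS]mulrSr mulrDl mul1r opprD addrA.
set y := (a - m.+1%:R * d)%R.
have yad : (y <= a - d)%R.
  by rewrite lerD2l lerN2 ler_peMl ?(ltW d_gt0) // ler1n.
have yd : (y - d <= y)%R by rewrite gerBl ltW.
have ada : (a - d <= a)%R by rewrite gerBl ltW.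
rewrite (integral_itv_split g_ge0 g_ni yd (le_trans yad ada)).
rewrite addeC leeD2r //.
have -> : (m%:R * (eta * d))%:E = (m%:R * eta)%:E * (y - (y - d))%:E.
  by rewrite opprB addrC subrK -EFinM mulrA.
apply: le_trans (integral_itv_co_ge g_ge0 g_ni yd).
by apply: lee_wpmul2r; [rewrite lee_fin opprB addrC subrK ltW|apply: le_trans meta (g_ni _ _ yad)].
Qed.

Lemma integral_itv_shift (K : nat) : (K%:R * d = a)%R ->
  (K%:R * eta)%:E <= g (a - d)%R ->
  (forall j, (0 < j < K)%N -> h (a - j%:R * d)%R <= g (a - j%:R * d)%R + eta%:E) ->
  forall x : R, (0 <= x)%R -> (x + 3 * d <= a)%R ->
  \int[lebesgue_measure]_(v in `[(x + 3 * d)%R, a]) h v <=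
    \int[lebesgue_measure]_(v in `[x, a]) g v.
Proof.
move=> Kda Keta hg x x0 x3a.
have d0 := d_gt0. (* [lra] only sees local hypotheses *)
have : (0 <= (a - x) / d)%R by apply: divr_ge0; lra.
move=> /truncn_itv/andP[]; set k := Num.truncn _.
rewrite ler_pdivlMr // ltr_pdivrMr // => kax axk.
have kK : (k <= K)%N.
  by rewrite -(ler_nat R) -(ler_pM2r d_gt0) Kda; lra.
have : (3 < k.+1)%N by rewrite -(ltr_nat R) -(ltr_pM2r d_gt0); lra.
case: k kK kax axk => [|[|m]] // mK kax axk _.
have e3 : (m.+3%:R * d = m%:R * d + 3 * d)%R by rewrite -addn3 natrD mulrDl.
have md : (a - m%:R * d <= x + 3 * d)%R by lra.
apply: le_trans (le_integral_itv_cc h_ge0 h_ni a md) _.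
apply: le_trans (integral_grid_shift m _ _) _.
- by move=> j /andP[j0 jm]; apply: hg; rewrite j0 (leq_ltn_trans jm (ltnW mK)).
- by apply: le_trans Keta; rewrite lee_fin ler_wpM2r // ler_nat ltnW // ltnW.
- by apply: (le_integral_itv_cc g_ge0 g_ni a); lra.
Qed.

End grid_comparison.

Section Finv.
Context {R : realType}.
Implicit Types (beta : R -> R).

Lemma invKstar_ge0 beta v : (0 <= (Kstar beta v)^-1)%E.
Proof. by rewrite inve_ge0 Kstar_ge0. Qed.

Lemma invKstar_nonincreasing beta : nonincreasing_fun (fun v => (Kstar beta v)^-1)%E.
Proof. by move=> v w vw; rewrite lee_pV2 ?inE /= ?Kstar_ge0 ?Kstar_nondecreasing. Qed.

Lemma Ffun_le_beta (a : R) beta1 beta2 x : (forall s, 0 < s -> beta1 s <= beta2 s) ->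
  (Ffun a beta1 x <= Ffun a beta2 x)%E.
Proof.
move=> b12; apply: (ge0_le_integral lebesgue_measure) => //.
- by move=> v _; exact: invKstar_ge0.
- by apply: nonincreasing_emeasurable => //; exact: invKstar_nonincreasing.
- by apply: nonincreasing_emeasurable => //; exact: invKstar_nonincreasing.
- by move=> v _; rewrite lee_pV2 ?inE /= ?Kstar_ge0 ?Kstar_le_beta.
Qed.

Variable a : R.
Hypothesis a_gt0 : 0 < a.

Lemma Finv_le beta y x : 0 < x <= a -> (Ffun a beta x <= y%:E)%E -> Finv a beta y <= x.
Proof.
move=> xa Fx; apply: ge_inf => //.
by exists 0 => z [/andP[z0 _] _]; exact: ltW.
Qed.

Lemma Finv_le_a beta y : 0 <= y -> Finv a beta y <= a.
Proof.
move=> y0; apply: Finv_le; first by rewrite a_gt0 lexx.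
by rewrite /Ffun set_itv1 integral_set1 lee_fin.
Qed.

Lemma Finv_le_shift beta1 beta2 (c y : R) : 0 <= c -> 0 <= y ->
  (forall x, 0 < x -> x + c <= a -> (Ffun a beta2 (x + c) <= Ffun a beta1 x)%E) ->
  Finv a beta2 y <= Finv a beta1 y + c.
Proof.
move=> c0 y0 hF; rewrite -lerBlDr; apply: lb_le_inf.
  exists a; split; first by rewrite a_gt0 lexx.
  by rewrite /Ffun set_itv1 integral_set1 lee_fin.
move=> x [/andP[x0 xa] Fx]; rewrite lerBlDr.
have [axc|xca] := leP a (x + c); first exact: le_trans (Finv_le_a beta2 y y0) axc.
apply: Finv_le; first by rewrite (ltW xca) andbT ltr_wpDr.
exact: le_trans (hF _ x0 (ltW xca)) Fx.
Qed.

End Finv.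

Lemma Finv_near_le {R : realType} {I : Type} {F : set_system I} {FF : Filter F}
    {a : R} {beta : R -> R} {b : I -> R -> R} : 0 < a ->
  (forall v : R, 0 < v -> v < a -> exists2 s : R, 0 < s & v < beta s) ->
  (forall s : R, 0 < s -> 0 <= beta s) ->
  (forall s t : R, 0 < s -> s <= t -> beta t <= beta s) ->
  (forall s : R, 0 < s -> b i s @[i --> F] --> beta s) ->
  forall e : R, 0 < e ->
  \forall i \near F, forall y : R, 0 <= y -> Finv a (b i) y <= Finv a beta y + e.
Proof.
move=> a0 beta_gt beta_ge0 beta_ni b_cvg e e0.
pose K := (Num.truncn (3 * a / e)).+2.
pose d := a / K%:R.
have K0 : 0 < K%:R :> R by rewrite ltr0n.
have d0 : 0 < d by rewrite divr_gt0.
have Kd : K%:R * d = a by rewrite mulrC divfK // gt_eqF.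
have d3e : 3 * d <= e.
  have ae0 : 0 <= 3 * a / e by apply: divr_ge0; lra.
  have : 3 * a / e < K%:R.
    by have /andP[_ /lt_le_trans->] := truncn_itv ae0; rewrite // ler_nat.
  by rewrite ltr_pdivrMr // -Kd => ?; rewrite -(ler_pM2r K0); nra.
have d2a : 2 * d <= a.
  by rewrite -[X in _ <= X]Kd ler_wpM2r ?(ltW d0) // ler_nat.
have [s s0 ads] : exists2 s, 0 < s & a - d < beta s by apply: beta_gt; lra.
pose eta := s / (a - d) / K%:R.
have eta0 : 0 < eta by rewrite !divr_gt0 //; lra.
have Keta : ((K%:R * eta)%:E <= (Kstar beta (a - d))^-1)%E.
  have ad0 : 0 < a - d by lra.
  have -> : (K%:R * eta)%:E = (((a - d) / s)%:E)^-1%E.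
    by rewrite inver gt_eqF ?divr_gt0 // invf_div /eta mulrC divfK // gt_eqF.
  rewrite lee_pV2 ?inE /= ?Kstar_ge0 ?lee_fin ?divr_ge0 ?(ltW s0) ?(ltW ad0) //.
  by apply: Kstar_le_div => //; lra.
have grid : \forall i \near F, forall j : 'I_K,
    ((Kstar (b i) (a - j%:R * d))^-1 <= (Kstar beta (a - j%:R * d))^-1 + eta%:E)%E.
  by apply: filter_forall => j; exact: invKstar_usc.
apply: filterS grid => i grid y y0.
apply: le_trans (_ : _ <= Finv a beta y + 3 * d) _; last by rewrite lerD2l.
apply: Finv_le_shift => // [|x x0 x3a]; first by rewrite mulr_ge0 ?ltW.
apply: (integral_itv_shift (invKstar_ge0 beta) (invKstar_nonincreasing beta)
  (invKstar_ge0 (b i)) (invKstar_nonincreasing (b i)) d0 (ltW eta0) K Kd Keta) => //.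
- by move=> j /andP[_ jK]; exact: (grid (Ordinal jK)).
- exact: ltW.
Qed.

Section superPoincare.
Context {d : measure_display} {T : measurableType d} {R : realType}.
Context {mu : probability T R} {P : R.-pker T ~> T} {Phi : (T -> R) -> \bar R}.
Context {beta : R -> R}.
Hypothesis SP : superPoincare mu P Phi beta.

Lemma norm2sq_ge0 (f : T -> R) : 0 <= norm2sq mu f.
Proof. by apply: fine_ge0; apply: integral_ge0 => x _; rewrite lee_fin sqr_ge0. Qed.

Lemma superPoincare_le f s : L20 mu f -> 0 < s ->
  (((1 - s) * norm2sq mu f)%:E <= (beta s)%:E * Phi f)%E.
Proof.
move=> f0 s0; apply: le_trans (_ : ((norm2sq mu f - s * dirichlet_PstarP mu P f)%:E <= _)%E).
  rewrite lee_fin /dirichlet_PstarP mulrBl mul1r lerD2l lerN2 ler_wpM2l ?(ltW s0) //.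
  by rewrite gerBl norm2sq_ge0.
by rewrite EFinB leeBlDl // SP.
Qed.

(* If [beta s <= v] for [s = 1 - v / w], the super-Poincare inequality gives
   [||f||^2 <= w Phi f] for every [f], whence [a <= w]. *)
Lemma superPoincare_beta_gt (a : R) : (forall f, L2 mu f -> (0 <= Phi f)%E) ->
  a%:E = ereal_sup [set ((norm2sq mu f)%:E / Phi f)%E |
                    f in [set f | L20 mu f /\ norm2sq mu f != 0]] ->
  forall v : R, 0 < v -> v < a -> exists2 s : R, 0 < s & v < beta s.
Proof.
move=> Phi_ge0 ha v v0 va; pose w := (v + a) / 2.
have vw : v < w by rewrite /w; lra.
have : (w%:E < a%:E)%E by rewrite lte_fin /w; lra.
rewrite ha => /ereal_sup_gt[_ [f [f0 Nf0] <-]] wN.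
have N0 : 0 < norm2sq mu f by rewrite lt_neqAle eq_sym Nf0 norm2sq_ge0.
have s0 : 0 < 1 - v / w by rewrite subr_gt0 ltr_pdivrMr ?mul1r //; lra.
exists (1 - v / w) => //; rewrite ltNge; apply/negP => bv.
have := superPoincare_le _ _ f0 s0; rewrite opprB addrC subrK.
have := Phi_ge0 _ f0.1; case: (Phi f) wN => [p||] //; last first.
  by rewrite invey mule0 lte_fin ltNge (ltW (lt_trans v0 vw)).
rewrite lee_fin -EFinM lee_fin => wN p0 hN.
have {}hN : norm2sq mu f <= w * p.
  have /(ler_wpM2r p0) := bv; move/(le_trans hN).
  by rewrite mulrAC ler_pdivrMr ?(lt_trans v0 vw) // -mulrA ler_pM2l // mulrC.
have [p_eq0|pn0] := eqVneq p 0; first by move: hN; rewrite p_eq0 mulr0; lra.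
have p_gt0 : 0 < p by rewrite lt_neqAle eq_sym pn0.
by move: wN; rewrite inver (negbTE pn0) -EFinM lte_fin ltr_pdivlMr // ltNge hN.
Qed.

End superPoincare.

Lemma sup_ge0_le {R : realType} (S : set R) (e : R) : S !=set0 ->
  (forall x, S x -> 0 <= x <= e) -> 0 <= sup S <= e.
Proof.
move=> S0 hS; have ubS : ubound S e by move=> y /hS/andP[].
have [x Sx] := S0; have /andP[x0 _] := hS x Sx.
apply/andP; split; last exact: ge_sup S0 ubS.
exact: le_trans x0 (ub_le_sup (ex_intro _ e ubS) Sx).
Qed.

Theorem proposition41 (d : measure_display) (T : measurableType d)
  (R : realType) (mu : probability T R)
  (P1 : R.-pker T ~> T) (P2 : R -> R.-pker T ~> T)
  (Phi : (T -> R) -> \bar R) (a : R)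
  (beta1 : R -> R) (beta2 : R -> R -> R) :
  mu_invariant mu P1 ->
  (forall iota, 0 < iota -> mu_invariant mu (P2 iota)) ->
  (* Phi : L^2(mu) -> [0, oo] *)
  (forall f, L2 mu f -> (0 <= Phi f)%E) ->
  (* a = sup_{f in L^2_0 \ {0}} ||f||^2 / Phi(f), and 0 < a < oo *)
  0 < a ->
  a%:E = ereal_sup [set ((norm2sq mu f)%:E / Phi f)%E |
                    f in [set f | L20 mu f /\ norm2sq mu f != 0]] ->
  (* 2-homogeneity *)
  (forall c f, L2 mu f -> Phi (fun x => c * f x) = ((c ^+ 2)%:E * Phi f)%E) ->
  (forall f, L2 mu f ->
     ((norm2sq mu (fun x => (f x - mean mu f)%R))%:E
        <= a%:E * Phi (fun x => (f x - mean mu f)%R))%E) ->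
  (* non-expansivity *)
  (forall n f, L2 mu f -> (Phi (iter n (kop P1) f) <= Phi f)%E) ->
  (forall iota, 0 < iota -> forall n f, L2 mu f ->
     (Phi (iter n (kop (P2 iota)) f) <= Phi f)%E) ->
  (* super-Poincare inequalities *)
  superPoincare mu P1 Phi beta1 ->
  (forall iota, 0 < iota -> superPoincare mu (P2 iota) Phi (beta2 iota)) ->
  (* beta1, beta2 iota : (0,oo) -> [0,oo) decreasing, tending to 0 at oo *)
  (forall s, 0 < s -> 0 <= beta1 s) ->
  (forall s t, 0 < s -> s <= t -> beta1 t <= beta1 s) ->
  beta1 x @[x --> +oo] --> 0 ->
  (forall iota, 0 < iota -> forall s, 0 < s -> 0 <= beta2 iota s) ->
  (forall iota, 0 < iota -> forall s t, 0 < s -> s <= t ->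
     beta2 iota t <= beta2 iota s) ->
  (forall iota, 0 < iota -> beta2 iota x @[x --> +oo] --> 0) ->
  (* comparison and convergence of the beta's *)
  (forall iota, 0 < iota -> forall s, 0 < s -> beta1 s <= beta2 iota s) ->
  (forall s, 0 < s -> beta2 iota s @[iota --> 0^'+] --> beta1 s) ->
  (forall iota, 0 < iota -> forall n : nat,
     Finv a beta1 n%:R <= Finv a (beta2 iota) n%:R) /\
  sup [set Finv a (beta2 iota) n%:R - Finv a beta1 n%:R | n in [set: nat]]
    @[iota --> 0^'+] --> 0.
Proof.
move=> _ _ Phi_ge0 a_gt0 ha _ _ _ _ SP1 _ b1_ge0 b1_ni _ _ _ _ b12 b_cvg.
have b1_gt := superPoincare_beta_gt SP1 a Phi_ge0 ha.
have Finv12 iota : 0 < iota -> forall n : nat,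
    Finv a beta1 n%:R <= Finv a (beta2 iota) n%:R.
  move=> i0 n; rewrite -[leRHS]addr0; apply: Finv_le_shift => // x _ _.
  by rewrite addr0; apply: Ffun_le_beta; exact: b12.
split => //; apply/cvgrPdist_le => e e0.
apply: filterS2 (Finv_near_le a_gt0 b1_gt b1_ge0 b1_ni b_cvg e e0) (nbhs_right_gt 0).
move=> iota hle i0; set S := [set _ | n in _].
have /andP[S0 Se] : 0 <= sup S <= e.
  apply: sup_ge0_le => [|_ [n _ <-]]; first by eexists; exists 0%N.
  by rewrite subr_ge0 Finv12 //= lerBlDl; exact: hle.
by rewrite sub0r normrN ger0_norm.
Qed.
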